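(* Let $\delta$ be an $\mathfrak l_m$-dominant integral weight, let $k\ge k'$ be non-negative integers, and let $K\in\kappa(\delta,k)$ and $K'\in\kappa(\delta,k')$ with $K\ne K'$. Then $\chi_{\delta+\lambda_K}=\chi_{\delta+\lambda_{K'}}$ if and only if $\delta$ is resonant, $i:=i(\delta,k)$ is defined, $\tilde\delta_i<k+K_i$, and $K'=K-d\,e_i$ where $d=k+K_i-\tilde\delta_i$.
   Context: $\mathfrak a_m\cong\mathfrak{sl}_{m+1}$ is the projective subalgebra $\mathrm{Span}\{\partial_{x_i},x_j\partial_{x_i},x_j\sum_rx_r\partial_{x_r}\}$ of polynomial vector fields on $\mathbb R^m$, with Cartan subalgebra $\mathfrak h_m=\mathrm{Span}\{x_i\partial_{x_i}\}$. Weights: $\mathfrak h_m^*=\{\lambda=\sum_{i=0}^m\lambda_i\epsilon_i:\sum\lambda_i=0\}$ with $\lambda(x_j\partial_{x_j})=\lambda_j$ ($1\le j\le m$). Let $\rho=\sum_{i=0}^m(\tfrac m2-i)\epsilon_i$; $S_{m+1}$ acts on $\mathfrak h_m^*$ by permuting indices $0,\dots,m$, $w\cdot\lambda=w(\lambda+\rho)-\rho$; $\chi_\lambda$ is the infinitesimal character of $\mathfrak a_m$ associated to $\lambda$ via the Harish-Chandra isomorphism, and $\chi_\lambda=\chi_{\lambda'}$ iff $\lambda'\in S_{m+1}\cdot\lambda$. $\lambda$ is $\mathfrak l_m$-dominant integral if $\lambda_i-\lambda_{i+1}\in\mathbb N$ for $1\le i<m$. $e_i$ is the $i$-th standard basis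 vector of $\mathbb Z^m$. For $K\in\mathbb N^m$: $|K|=\sum K_i$, $\lambda_K=|K|\epsilon_0-\sum_{i=1}^mK_i\epsilon_i$, $\kappa(\delta,k)=\{K\in\mathbb N^m:|K|=k,\ K_i\le\delta_i-\delta_{i+1}\text{ for }i<m\}$. For $\delta=(\delta_0,\dots,\delta_m)$ $\mathfrak l_m$-dominant integral: $i(\delta)\in\{1,\dots,m\}$ is maximal with $\delta_1=\cdots=\delta_{i(\delta)}$; $\tilde\delta_i=\delta_i-i-\delta_0$; $\delta$ is resonant if $\tilde\delta_{i(\delta)}\in\mathbb Z^+$; for $\delta$ resonant, $k\in\mathbb Z^+$ and $\tilde\delta_{i(\delta)}\ge k$, $i(\delta,k)\in\{i(\delta),\dots,m\}$ is maximal with $\tilde\delta_{i(\delta,k)}\ge k$; otherwise $i(\delta,k)$ is undefined. *)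

From HB Require Import structures.
From mathcomp Require Import all_boot all_order all_algebra perm.
Set Implicit Arguments. Unset Strict Implicit. Unset Printing Implicit Defensive.
Import Order.TTheory GRing.Theory Num.Theory.
Local Open Scope ring_scope.

Section Weights.
Variables (C : numClosedFieldType) (m : nat).

(* A weight lambda = sum_{i=0}^m lambda_i eps_i is a function 'I_m.+1 -> C;
   the condition sum lambda_i = 0 is imposed separately as a hypothesis. *)
Definition wt := 'I_m.+1 -> C.

Definition wat (l : wt) (i : nat) : C := l (inord i).

Definition is_weight (l : wt) : Prop := \sum_(i < m.+1) l i = 0.

Definition rho : wt := fun i => (m%:R / 2%:R) - (nat_of_ord i)%:R.

(* chi_l = chi_l'  iff  l' \in S_{m+1} . l, i.e. l' + rho = w (l + rho)
   for some permutation w of the indices 0..m. *)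
Definition same_chi (l l' : wt) : Prop :=
  exists s : 'S_m.+1, forall i : 'I_m.+1, l' i + rho i = l (s i) + rho (s i).

Definition lm_dominant (l : wt) : Prop :=
  forall i : nat, (1 <= i)%N -> (i < m)%N -> exists n : nat, wat l i - wat l i.+1 = n%:R.

(* K \in N^m is a function 'I_m -> nat; K_i (1 <= i <= m) is K at ordinal i-1. *)
Definition Kat (K : 'I_m -> nat) (i : nat) : nat :=
  match unlift ord0 (inord i : 'I_m.+1) with Some j => K j | None => 0%N end.

Definition absK (K : 'I_m -> nat) : nat := (\sum_(j < m) K j)%N.

Definition lamK (K : 'I_m -> nat) : wt :=
  fun i => match unlift ord0 i with
           | None => (absK K)%:R
           | Some j => - (K j)%:R
           end.

Definition addw (l l' : wt) : wt := fun i => l i + l' i.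

Definition kappa (d : wt) (k : nat) (K : 'I_m -> nat) : Prop :=
  absK K = k /\
  forall i : nat, (1 <= i)%N -> (i < m)%N -> (Kat K i)%:R <= wat d i - wat d i.+1.

Definition idelta (d : wt) : nat :=
  (\max_(i < m.+1 | (0 < i)%N &&
      [forall j : 'I_m.+1, ((0 < j)%N && (j <= i)%N) ==> (d j == wat d 1)%R]) i)%N.

Definition dtilde (d : wt) (i : nat) : C := wat d i - i%:R - wat d 0.

Definition resonant (d : wt) : Prop :=
  exists n : nat, (0 < n)%N /\ dtilde d (idelta d) = n%:R.

(* idk d k i  <->  i(delta,k) is defined and equals i *)
Definition idk (d : wt) (k : nat) (i : nat) : Prop :=
  resonant d /\ (0 < k)%N /\ k%:R <= dtilde d (idelta d) /\
  i = (\max_(j < m.+1 | (idelta d <= j)%N && (k%:R <= dtilde d j)%R) j)%N.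

End Weights.

From HB Require Import structures.
From mathcomp Require Import all_boot all_order all_algebra perm.
From mathcomp Require Import ring zify.
Set Implicit Arguments. Unset Strict Implicit. Unset Printing Implicit Defensive.
Import Order.TTheory GRing.Theory Num.Theory.
Local Open Scope ring_scope.

(* Up to a common constant, the coordinates of [d + lamK K + rho] are [|K|] at
   index 0 and [dtilde_t - K_t] at [t >= 1].  Dominance and the bounds defining
   kappa give [dtilde_t - K_t - dtilde_u] a positive integer for [0 < t < u].
   Hence a permutation carrying the coordinates for [K'] to those for [K] fixes
   every nonzero index it does not send to 0: it is the transposition [(0 i)],
   the identity being excluded by [K <> K'].  Comparing the two exchanged
   coordinates gives [dtilde_i = k + K'_i = k' + K_i], which forces [k' < k],
   resonance, [i = i(delta,k)] and the formula for [K']. *)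

Lemma Kat_lift (m : nat) (K : 'I_m -> nat) (j : 'I_m) : Kat K j.+1 = K j.
Proof.
rewrite /Kat; have -> : (inord j.+1 : 'I_m.+1) = lift ord0 j.
  by apply: val_inj; rewrite /= inordK // ltnS.
by rewrite liftK.
Qed.

Lemma eqSS_ord (m : nat) (i j : 'I_m) : (i.+1 == j.+1) = (i == j).
Proof. by rewrite eqSS. Qed.

Lemma wat_val (C : numClosedFieldType) (m : nat) (d : wt C m) (t : 'I_m.+1) :
  wat d t = d t.
Proof. by rewrite /wat inord_val. Qed.

Section Characters.
Variables (C : numClosedFieldType) (m : nat) (d : wt C m).

Definition nu (K : 'I_m -> nat) (t : 'I_m.+1) : C :=
  if t == ord0 then (absK K)%:R else dtilde d t - (Kat K t)%:R.

Lemma addw_lamK_rhoE (K : 'I_m -> nat) (t : 'I_m.+1) :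
  addw d (lamK C K) t + rho C t = wat d 0 + m%:R / 2%:R + nu K t.
Proof.
have w0 : wat d 0 = d ord0 by rewrite -(wat_val d ord0).
rewrite /addw /lamK /rho /nu /dtilde w0.
case: (unliftP ord0 t) => [j ->|->]; last by rewrite eqxx /= subr0; ring.
by rewrite eq_sym (negbTE (neq_lift _ _)) wat_val lift0 Kat_lift; ring.
Qed.

Lemma same_chi_nuP (K K' : 'I_m -> nat) :
  same_chi (addw d (lamK C K)) (addw d (lamK C K')) <->
  exists s : 'S_m.+1, forall t, nu K' t = nu K (s t).
Proof.
split=> -[s Hs]; exists s => t; first by have := Hs t; rewrite !addw_lamK_rhoE => /addrI.
by rewrite !addw_lamK_rhoE Hs.
Qed.

Lemma nu_liftE (K : 'I_m -> nat) (j : 'I_m) :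
  nu K (lift ord0 j) = dtilde d j.+1 - (K j)%:R.
Proof. by rewrite /nu eq_sym (negbTE (neq_lift _ _)) lift0 Kat_lift. Qed.

Lemma nu_lift_inj (K K' : 'I_m -> nat) (j : 'I_m) :
  nu K' (lift ord0 j) = nu K (lift ord0 j) -> K' j = K j.
Proof. by rewrite !nu_liftE => /addrI/oppr_inj/eqP; rewrite eqr_nat => /eqP. Qed.

Definition swapped (K K' : 'I_m -> nat) (j0 : 'I_m) : Prop :=
  (forall j, j != j0 -> K' j = K j) /\ (K' j0)%:R = dtilde d j0.+1 - (absK K)%:R.

Lemma swapped_absK (K K' : 'I_m -> nat) (j0 : 'I_m) :
  swapped K K' j0 -> dtilde d j0.+1 = (absK K')%:R + (K j0)%:R.
Proof.
move=> [K_other K'j0]; rewrite /absK (bigD1 j0) //= (eq_bigr _ K_other) natrD K'j0.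
by rewrite /absK [in X in _ - X](bigD1 j0) //= natrD; ring.
Qed.

Lemma nu_tpermP (K K' : 'I_m -> nat) (j0 : 'I_m) :
  (forall t, nu K' t = nu K (tperm ord0 (lift ord0 j0) t)) <-> swapped K K' j0.
Proof.
have nu0 K1 : nu K1 ord0 = (absK K1)%:R by rewrite /nu eqxx.
split=> [hs | sw t].
  split=> [j jj0 | ]; last by have := hs (lift ord0 j0); rewrite tpermR nu0 nu_liftE => <-; ring.
  by apply: nu_lift_inj; rewrite hs tpermD // (inj_eq lift_inj) eq_sym.
case: tpermP => [->|->|t0 tj0]; rewrite ?nu0 ?nu_liftE.
- by rewrite (swapped_absK sw); ring.
- by rewrite sw.2; ring.
- case: (unliftP ord0 t) t0 tj0 => [j -> _ tj0|->] //.
  by rewrite !nu_liftE sw.1 //; apply: contra_not_neq tj0 => ->.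
Qed.

Lemma swapped_shiftE (K K' : 'I_m -> nat) (j0 : 'I_m) :
  swapped K K' j0 <->
  forall j, (K' j)%:R = (K j)%:R -
    (if j.+1 == j0.+1 then (absK K)%:R + (Kat K j0.+1)%:R - dtilde d j0.+1 else 0).
Proof.
rewrite Kat_lift; split=> [[K_other K'j0] j | K'E].
  case: (eqVneq j j0) => [-> | jj0]; first by rewrite eqxx K'j0; ring.
  by rewrite eqSS_ord (negbTE jj0) subr0 K_other.
split=> [j jj0 | ]; last by rewrite K'E eqxx; ring.
by apply/eqP; rewrite -(eqr_nat C) K'E eqSS_ord (negbTE jj0) subr0.
Qed.

Lemma swapped_absK_lt (K K' : 'I_m -> nat) (j0 : 'I_m) :
  (absK K' <= absK K)%N -> K j0 <> K' j0 -> swapped K K' j0 -> (absK K' < absK K)%N.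
Proof.
move=> le_K'K Kj0 sw; suff : (absK K + K' j0 = absK K' + K j0)%N by lia.
by apply/eqP; rewrite -(eqr_nat C) !natrD -(swapped_absK sw) sw.2; apply/eqP; ring.
Qed.

Hypothesis hd : lm_dominant d.

Lemma dtilde_sub_nat (a c : nat) : (1 <= a)%N -> (a + c <= m)%N ->
  exists n : nat, dtilde d a - dtilde d (a + c) = (n + c)%:R.
Proof.
move=> a1; elim: c => [|c IH] hc; first by exists 0%N; rewrite addn0 subrr.
have [n Hn] := IH (ltac:(lia)).
have [n' Hn'] := @hd (a + c)%N (leq_trans a1 (leq_addr _ _)) (ltac:(lia)).
exists (n + n')%N.
have -> : dtilde d a - dtilde d (a + c.+1) =
    (dtilde d a - dtilde d (a + c)) + (wat d (a + c) - wat d (a + c).+1) + 1.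
  by rewrite /dtilde addnS -addn1 natrD; ring.
by rewrite Hn Hn' -natrD natr1; apply/eqP; rewrite eqr_nat; apply/eqP; lia.
Qed.

Lemma dtilde_sub_Kat_gap (k : nat) (K : 'I_m -> nat) (t u : nat) :
  kappa d k K -> (1 <= t)%N -> (t < u)%N -> (u <= m)%N ->
  exists p : nat, dtilde d t - (Kat K t)%:R - dtilde d u = p.+1%:R.
Proof.
move=> [_ hb] t1 tu um; have tm : (t < m)%N by lia.
have [n Hn] := hd t1 tm.
have Kt := hb t t1 tm; rewrite Hn ler_nat in Kt.
have [q Hq] := dtilde_sub_nat (a := t.+1) (c := u - t.+1) (ltn0Sn _) (ltac:(lia)).
rewrite (_ : (t.+1 + (u - t.+1))%N = u) in Hq; last by lia.
exists (n - Kat K t + q + (u - t.+1))%N.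
have -> : dtilde d t - (Kat K t)%:R - dtilde d u =
    (wat d t - wat d t.+1) + 1 + (dtilde d t.+1 - dtilde d u) - (Kat K t)%:R.
  by rewrite /dtilde -addn1 natrD; ring.
by rewrite Hn Hq; apply/eqP; rewrite subr_eq natr1 -!natrD eqr_nat; apply/eqP; lia.
Qed.

Lemma dtilde_sub_Kat_neq (k : nat) (K K' : 'I_m -> nat) (t u : nat) :
  kappa d k K -> (1 <= t)%N -> (t < u)%N -> (u <= m)%N ->
  dtilde d t - (Kat K t)%:R <> dtilde d u - (Kat K' u)%:R.
Proof.
move=> hK t1 tu um E; have [p] := dtilde_sub_Kat_gap hK t1 tu um.
rewrite E (_ : _ - _ - _ = - (Kat K' u)%:R); last by ring.
by move/eqP; rewrite eq_sym -subr_eq0 opprK -natrD pnatr_eq0.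
Qed.

Lemma nu_perm_fix (k k' : nat) (K K' : 'I_m -> nat) (s : 'S_m.+1) :
  kappa d k K -> kappa d k' K' -> (forall t, nu K' t = nu K (s t)) ->
  forall t, t != ord0 -> s t != ord0 -> s t = t.
Proof.
move=> hK hK' hs t t0 st0; have := hs t; rewrite /nu (negbTE t0) (negbTE st0).
rewrite -!lt0n in t0 st0.
case: (ltngtP t (s t)) => [lt|gt|eq] E; last exact: val_inj.
- by have := dtilde_sub_Kat_neq (K' := K) hK' t0 lt (ltn_ord (s t)).
- by have := dtilde_sub_Kat_neq (K' := K') hK st0 gt (ltn_ord t); rewrite E.
Qed.

Lemma nu_perm_tperm (k k' : nat) (K K' : 'I_m -> nat) (s : 'S_m.+1) :
  kappa d k K -> kappa d k' K' -> (exists j, K j <> K' j) ->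
  (forall t, nu K' t = nu K (s t)) ->
  exists j0 : 'I_m, s = tperm ord0 (lift ord0 j0).
Proof.
move=> hK hK' [j Kj] hs; set i := (s^-1)%g ord0.
have si : s i = ord0 by rewrite permKV.
have s_fix t : t != i -> t != ord0 -> s t = t.
  move=> ti t0; apply: (nu_perm_fix hK hK' hs t0).
  by apply: contra ti; rewrite -{1}si => /eqP/perm_inj ->.
have [j0 ij0 | i0] := unliftP ord0 i; last first.
  case: Kj; apply/esym/nu_lift_inj; rewrite hs s_fix //.
  by rewrite i0 eq_sym neq_lift.
have s0 : s ord0 = i.
  apply/eqP; apply: contraT => s0i.
  have s00 : s ord0 != ord0.
    by rewrite -[X in _ != X]si (inj_eq perm_inj) ij0 neq_lift.
  by have /perm_inj/eqP := s_fix _ s0i s00; rewrite (negbTE s00).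
exists j0; apply/permP => t; rewrite permE /=.
case: (eqVneq t ord0) => [-> | t0]; first by rewrite s0.
case: (eqVneq t i) => [-> | ti]; first by rewrite si ij0 eqxx.
by rewrite -ij0 (negbTE ti) s_fix.
Qed.

Hypothesis hm : (0 < m)%N.

Lemma ideltaP :
  [/\ (1 <= idelta d)%N, (idelta d <= m)%N &
   forall j, (0 < j)%N -> (j <= idelta d)%N -> wat d j = wat d 1].
Proof.
set P := fun i : 'I_m.+1 => (0 < i)%N &&
  [forall j : 'I_m.+1, ((0 < j)%N && (j <= i)%N) ==> (d j == wat d 1)].
have val1 : (inord 1 : 'I_m.+1) = 1%N :> nat by rewrite inordK // ltnS.
have P1 : P (inord 1).
  rewrite /P val1 /=; apply/forallP => j; apply/implyP => /andP[j0 j1].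
  suff -> : j = inord 1 by [].
  by apply: val_inj; rewrite /= val1; lia.
have P_nonempty : (0 < #|[pred i | P i]|)%N by apply/card_gt0P; exists (inord 1).
have [i0 Pi0 E] := eq_bigmax_cond (fun i : 'I_m.+1 => nat_of_ord i) P_nonempty.
rewrite (_ : idelta d = i0); last by rewrite /idelta -E.
move: Pi0 => /andP[i0_gt0 /forallP eq1]; split => //; first by rewrite -ltnS.
move=> j j0 ji; have jm : (j < m.+1)%N by apply: leq_ltn_trans ji _.
by have := eq1 (inord j); rewrite inordK // j0 ji => /eqP.
Qed.

Lemma idelta_le_of_K_gt0 (k : nat) (K : 'I_m -> nat) (j : 'I_m) :
  kappa d k K -> (0 < K j)%N -> (idelta d <= j.+1)%N.
Proof.
move=> [_ hb] Kj; rewrite leqNgt; apply/negP => lt_j_id.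
have [_ id_m flat] := ideltaP; have jm : (j.+1 < m)%N by lia.
have := hb j.+1 isT jm; rewrite Kat_lift !flat //; last by lia.
by rewrite subrr lern0 => /eqP K0; rewrite K0 in Kj.
Qed.

Lemma idkP (k k' : nat) (K' : 'I_m -> nat) (i : nat) :
  (0 < k)%N -> (idelta d <= i)%N -> (i <= m)%N -> kappa d k' K' ->
  dtilde d i = k%:R + (Kat K' i)%:R -> idk d k i.
Proof.
move=> k0 id_i im hK' Di; have [id1 _ _] := ideltaP.
have [q Hq] := dtilde_sub_nat (c := i - idelta d) id1 (ltac:(lia)).
rewrite subnKC // Di in Hq.
set n := (k + Kat K' i + (q + (i - idelta d)))%N.
have Did : dtilde d (idelta d) = n%:R.
  by move/eqP: Hq; rewrite subr_eq => /eqP ->; rewrite /n !natrD; ring.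
split; first by exists n; split=> //; rewrite /n; lia.
split=> //; split; first by rewrite Did ler_nat; lia.
apply/eqP; rewrite eqn_leq; apply/andP; split.
- have := @leq_bigmax_cond _ (fun j : 'I_m.+1 => (idelta d <= j)%N && (k%:R <= dtilde d j))
    (fun j => nat_of_ord j) (inord i).
  by rewrite inordK // id_i Di lerDl ler0n; apply.
- apply/bigmax_leqP => j /andP[id_j kj]; rewrite leqNgt; apply/negP => ij.
  have [p Hp] := dtilde_sub_Kat_gap hK' (leq_trans id1 id_i) ij (ltn_ord j).
  move: kj; rewrite -subr_ge0 (_ : _ - _ = - p.+1%:R); last by rewrite -Hp Di; ring.
  by rewrite oppr_ge0 lern0.
Qed.

Lemma idk_swapped (k k' : nat) (K K' : 'I_m -> nat) (j0 : 'I_m) :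
  kappa d k K -> kappa d k' K' -> (absK K' <= absK K)%N -> K j0 <> K' j0 ->
  swapped K K' j0 -> idk d (absK K) j0.+1.
Proof.
move=> hK hK' le_K'K Kj0 sw.
have id_j0 : (idelta d <= j0.+1)%N.
  have [K0 | Kpos] := posnP (K j0); last exact: idelta_le_of_K_gt0 hK Kpos.
  apply: (idelta_le_of_K_gt0 hK'); rewrite lt0n; apply/eqP => K'0.
  by apply: Kj0; rewrite K0 K'0.
apply: (idkP _ id_j0 (ltn_ord j0) hK'); last by rewrite Kat_lift sw.2; ring.
by have := swapped_absK_lt le_K'K Kj0 sw; lia.
Qed.

End Characters.

Theorem mainTheorem11 (C : numClosedFieldType) (m : nat) (hm : (0 < m)%N)
  (d : wt C m) (hw : is_weight d) (hd : lm_dominant d)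
  (k k' : nat) (hkk : (k' <= k)%N) (K K' : 'I_m -> nat)
  (hK : kappa d k K) (hK' : kappa d k' K') (hne : exists j, K j <> K' j) :
  same_chi (addw d (@lamK C m K)) (addw d (@lamK C m K')) <->
  (resonant d /\
   exists i : nat, idk d k i /\
     dtilde d i < k%:R + (Kat K i)%:R /\
     forall j : 'I_m,
       (K' j)%:R = (K j)%:R
                   - (if j.+1 == i then k%:R + (Kat K i)%:R - dtilde d i else 0)).
Proof.
have [absK_k _] := hK; have [absK_k' _] := hK'; subst k k'.
rewrite same_chi_nuP; split.
- case=> s hs; have [j0 s_tperm] := nu_perm_tperm hd hK hK' hne hs.
  move: hs; rewrite s_tperm => /nu_tpermP sw.
  have Kj0 : K j0 <> K' j0.
    by case: hne => j; case: (eqVneq j j0) => [-> // | /sw.1 ->].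
  have Hidk := idk_swapped hd hm hK hK' hkk Kj0 sw.
  split; first by case: Hidk.
  exists j0.+1; split=> //; split; last exact/swapped_shiftE.
  by rewrite Kat_lift (swapped_absK sw) ltrD2r ltr_nat (swapped_absK_lt hkk Kj0 sw).
- case=> _ [i [_ [_ K'E]]]; case: hne => j0 Kj0.
  have ij0 : j0.+1 = i.
    apply/eqP; apply: contra_notT Kj0 => ne.
    by have /eqP := K'E j0; rewrite (negbTE ne) subr0 eqr_nat => /eqP.
  by subst i; exists (tperm ord0 (lift ord0 j0)); apply/nu_tpermP/swapped_shiftE.
Qed.
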